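(* Let $G=(V,R,E)$ be a finite bipartite version–record graph, let $\mathbb{T}=(V,\mathbb{E})$ be a version tree on $V$ satisfying the standing assumptions below, and let $\delta>0$. Let $e^*=(v_i,v_j)\in\mathbb{E}$ be an edge with $w(v_i,v_j)\le\delta|R|$ (an edge that LyreSplit may split). Removing $e^*$ splits $\mathbb{T}$ into two subtrees with version sets $V_1,V_2$; let $R_1=\bigcup_{v\in V_1}R(v)$ and $R_2=\bigcup_{v\in V_2}R(v)$. Then the storage cost after splitting satisfies $\mathcal{S}=|R_1|+|R_2|\le(1+\delta)|R|$.
   Context: $(v,r)\in E$ means version $v$ contains record $r$; $R(v)=\{r:(v,r)\in E\}$ and $R=\bigcup_{v\in V}R(v)$. The version tree $\mathbb{T}$ is a rooted tree on $V$ whose edges go from parent to child version, with weight $w(v_i,v_j)=|R(v_i)\cap R(v_j)|$. Standing assumption (no cross-version diff rule): for every record $r$, the set of versions containing $r$ is a connected subtree of $\mathbb{T}$. The storage cost of a partitioning of $V$ into blocks is the sum over blocks of the number of distinct records contained in versions of that block. *)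

From HB Require Import structures.
From mathcomp Require Import all_boot all_order all_algebra.
Set Implicit Arguments. Unset Strict Implicit. Unset Printing Implicit Defensive.
Import Order.TTheory GRing.Theory Num.Theory.

(* Version-record bipartite graph: versions [V], records [Rc], and
   [E v r] = (v,r) is an edge, i.e. version v contains record r. *)

Section VersionGraph.
Variables (V Rc : finType) (E : V -> Rc -> bool).

Definition recs_of (v : V) : {set Rc} := [set r | E v r].
Definition all_recs : {set Rc} := \bigcup_(v : V) recs_of v.
Definition recs_of_set (A : {set V}) : {set Rc} := \bigcup_(v in A) recs_of v.
Definition weight (vi vj : V) : nat := #|recs_of vi :&: recs_of vj|.

(* Rooted version tree on V given by a root and a parent function:
   tree edges are (par v, v) for v != root (parent -> child). *)
Variables (root : V) (par : V -> V).

Definition is_rooted_tree : Prop :=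
  forall v : V, exists n : nat, iter n par v = root.

Definition tree_edge (u v : V) : bool := (v != root) && (par v == u).

Definition tree_adj : rel V := fun u v => tree_edge u v || tree_edge v u.

Definition connected_in_tree (S : {set V}) : Prop :=
  forall u v, u \in S -> v \in S ->
    connect [rel x y | [&& x \in S, y \in S & tree_adj x y]] u v.

Definition no_cross_version_diff : Prop :=
  forall r : Rc, connected_in_tree [set v | E v r].

Definition tree_adj_minus (vi vj : V) : rel V := fun x y =>
  tree_adj x y && ~~ (((x == vi) && (y == vj)) || ((x == vj) && (y == vi))).

Definition component_minus (vi vj a : V) : {set V} :=
  [set v | connect (tree_adj_minus vi vj) a v].

End VersionGraph.

From HB Require Import structures.
From mathcomp Require Import all_boot all_order all_algebra.
Import Order.TTheory GRing.Theory Num.Theory.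

Set Implicit Arguments.
Unset Strict Implicit.
Unset Printing Implicit Defensive.

(* By inclusion-exclusion |R1| + |R2| = |R1 ∪ R2| + |R1 ∩ R2| <= |R| + |R1 ∩ R2|,
   so it suffices that R1 ∩ R2 ⊆ R(vi) ∩ R(vj), whose size is w(vi,vj) <= δ|R|.
   A record r in both R1 and R2 lies in versions a ∈ V1 and b ∈ V2; the versions
   containing r form a connected subtree, so a tree path from a to b stays inside
   it, and that path must use the removed edge (vi,vj), since vi and vj are
   disconnected once it is removed.  Hence r ∈ R(vi) ∩ R(vj). *)

Section TreeEdgeRemoval.
Variables (V : finType) (root : V) (par : V -> V).

Lemma tree_adj_minus_sym vi vj : symmetric (tree_adj_minus root par vi vj).
Proof.
move=> x y; rewrite /tree_adj_minus /tree_adj orbC; congr (_ && ~~ _).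
by rewrite orbC andbC [(y == vj) && _]andbC.
Qed.

Lemma connect_in_tree_minus (S : {set V}) vi vj :
  ~~ ((vi \in S) && (vj \in S)) ->
  subrel (connect [rel x y | [&& x \in S, y \in S & tree_adj root par x y]])
         (connect (tree_adj_minus root par vi vj)).
Proof.
move=> not_both; apply: connect_sub => x y /and3P[xS yS xy]; apply: connect1.
rewrite /tree_adj_minus xy; apply: contra not_both.
by case/orP=> /andP[/eqP <- /eqP <-]; rewrite ?xS ?yS.
Qed.

Hypothesis rooted : is_rooted_tree root par.

Let iter_par_root u : exists n, iter n par u == root.
Proof. by have [n un] := rooted u; exists n; apply/eqP. Qed.

Definition depth (u : V) : nat := ex_minn (iter_par_root u).

Lemma depth_par u : u != root -> depth u = (depth (par u)).+1.
Proof.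
rewrite /depth => u_nroot.
case: ex_minnP => m /eqP um min_m; case: ex_minnP => n /eqP pun min_n.
case: m um min_m => [|m] um min_m; first by rewrite -um eqxx in u_nroot.
apply/eqP; rewrite eqSS eqn_leq min_n ?andbT; last by rewrite -iterSr um.
by rewrite -ltnS min_m // iterSr pun.
Qed.

Lemma tree_edge_disconnects vi vj :
  tree_edge root par vi vj -> ~~ connect (tree_adj_minus root par vi vj) vi vj.
Proof.
move=> /andP[vj_nroot /eqP par_vj].
(* The descendants of [vj] are closed under the remaining edges, and [vi] is not
   one of them.  Descendance is read off depths, so that a cycle of [par]
   through the root, which [is_rooted_tree] allows, does no harm. *)
pose below := [pred u | (depth vj <= depth u)
                        && (iter (depth u - depth vj) par u == vj)].
have below_closed : closed (tree_adj_minus root par vi vj) below.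
  apply: intro_closed; first exact/sym_connect_sym/tree_adj_minus_sym.
  move=> x y /andP[/orP[/andP[y_nroot /eqP par_y]|/andP[x_nroot /eqP par_x]] not_e].
    rewrite !inE (depth_par y_nroot) par_y => /andP[le_x iter_x].
    by rewrite (leqW le_x) subSn // iterSr par_y.
  rewrite !inE (depth_par x_nroot) par_x leq_eqVlt => /andP[/orP[/eqP eq_d|lt_x] iter_x].
    move: iter_x; rewrite -eq_d subnn /= => /eqP x_vj.
    by rewrite -par_x x_vj par_vj !eqxx orbT in not_e.
  by rewrite -ltnS lt_x; rewrite subSn // iterSr par_x in iter_x.
apply/negP => /(closed_connect below_closed).
by rewrite !inE (depth_par vj_nroot) par_vj subnn eqxx ltnn leqnn.
Qed.

End TreeEdgeRemoval.

Section RecordsAcrossEdge.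
Variables (V Rc : finType) (E : V -> Rc -> bool) (root : V) (par : V -> V).
Variables vi vj : V.
Hypothesis no_diff : no_cross_version_diff E root par.
Hypothesis disconnected : ~~ connect (tree_adj_minus root par vi vj) vi vj.

Let V1 := component_minus root par vi vj vi.
Let V2 := component_minus root par vi vj vj.

Lemma recs_of_set_sub_all (A : {set V}) : recs_of_set E A \subset all_recs E.
Proof. by apply/bigcupsP => v _; apply: bigcup_sup. Qed.

Lemma recs_of_components_meet :
  recs_of_set E V1 :&: recs_of_set E V2 \subset recs_of E vi :&: recs_of E vj.
Proof.
apply/subsetP => r; rewrite inE => /andP[/bigcupP[a vi_a ra] /bigcupP[b vj_b rb]].
move: disconnected; apply: contraNT => not_shared.
have conn_ab : connect (tree_adj_minus root par vi vj) a b.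
  apply: (connect_in_tree_minus (S := [set v | E v r])).
    by rewrite !inE in not_shared *.
  by apply: no_diff; rewrite !inE in ra rb *.
rewrite !inE in vi_a vj_b.
apply: connect_trans vi_a (connect_trans conn_ab _).
by rewrite (sym_connect_sym (tree_adj_minus_sym _ _ _ _)).
Qed.

Lemma card_recs_components_le :
  #|recs_of_set E V1| + #|recs_of_set E V2| <= #|all_recs E| + weight E vi vj.
Proof.
rewrite -cardsUI leq_add ?subset_leq_card ?recs_of_components_meet //.
by rewrite subUset !recs_of_set_sub_all.
Qed.

End RecordsAcrossEdge.

Local Open Scope ring_scope.

Theorem lemma2 (F : realFieldType) (V Rc : finType) (E : V -> Rc -> bool)
    (root : V) (par : V -> V) (delta : F) (vi vj : V) :
  is_rooted_tree root par ->
  no_cross_version_diff E root par ->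
  0 < delta ->
  tree_edge root par vi vj ->
  (weight E vi vj)%:R <= delta * (#|all_recs E|)%:R ->
  let V1 := component_minus root par vi vj vi in
  let V2 := component_minus root par vi vj vj in
  (#|recs_of_set E V1| + #|recs_of_set E V2|)%:R
    <= (1 + delta) * (#|all_recs E|)%:R.
Proof.
move=> rooted no_diff _ edge light; cbv zeta.
have disconnected := tree_edge_disconnects rooted edge.
apply: le_trans (_ : (#|all_recs E| + weight E vi vj)%:R <= _).
  by rewrite ler_nat (card_recs_components_le no_diff disconnected).
by rewrite natrD mulrDl mul1r lerD2l light.
Qed.
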